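(* Let $n\ge2$ be even and define $Q:\mathbb{F}_{2^n}\to\mathbb{F}_2$ by $$Q(x)=\sum_{i=1}^{n/2-1}Tr_1^n\!\left(x^{2^i+1}\right)+Tr_1^{n/2}\!\left(x^{2^{n/2}+1}\right).$$ Let $f:\mathbb{F}_{2^n}\to\mathbb{F}_2$. Then (1) if $f$ is bent then $f+Q$ is negabent; (2) if $f$ is negabent then $f+Q$ is bent.
   Context: $Tr_1^m(z)=z+z^2+\dots+z^{2^{m-1}}$ (for $m\mid n$, a map $\mathbb{F}_{2^m}\to\mathbb{F}_2$; note $x^{2^{n/2}+1}\in\mathbb{F}_{2^{n/2}}$); write $Tr=Tr_1^n$. Fix a self-dual basis $\{\alpha_i\}$ of $\mathbb{F}_{2^n}$ over $\mathbb{F}_2$ ($Tr(\alpha_i\alpha_j)=\delta_{ij}$), identify $\mathbb{F}_{2^n}$ with $\mathbb{F}_2^n$ via coordinates, and let $wt(x)$ be the number of nonzero coordinates. For $g:\mathbb{F}_{2^n}\to\mathbb{F}_2$: $g$ is bent if $\left|\sum_x(-1)^{g(x)+Tr(\mu x)}\right|=2^{n/2}$ for all $\mu$; $g$ is negabent if $\left|\sum_x(-1)^{g(x)+Tr(\mu x)}\mathrm{i}^{wt(x)}\right|=2^{n/2}$ for all $\mu$ ($\mathrm{i}=\sqrt{-1}$). *)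

From mathcomp Require Import all_boot all_order all_algebra all_field.
Set Implicit Arguments. Unset Strict Implicit. Unset Printing Implicit Defensive.
Import Order.TTheory GRing.Theory Num.Theory.
Local Open Scope ring_scope.

Section Defs.
Variables (n : nat) (F : finFieldType).

(* absolute trace Tr_1^n : F_{2^n} -> F_2 (value in the prime subfield of F) *)
Definition Tr (x : F) : F := \sum_(i < n) x ^+ (2 ^ i).
Definition Tr_half (y : F) : F := \sum_(i < n./2) y ^+ (2 ^ i).
(* an element of the prime field {0,1} of F read as a boolean *)
Definition tob (a : F) : bool := a != 0.

Definition Q (x : F) : bool :=
  tob (\sum_(1 <= i < n./2) Tr (x ^+ (2 ^ i + 1)) + Tr_half (x ^+ (2 ^ (n./2) + 1))).

Definition self_dual (alpha : 'I_n -> F) : Prop :=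
  forall i j : 'I_n, Tr (alpha i * alpha j) = (i == j)%:R.

(* coordinate i of x in the self-dual basis alpha is Tr(x alpha_i);
   wt x = number of nonzero coordinates *)
Definition wt (alpha : 'I_n -> F) (x : F) : nat :=
  #|[set i : 'I_n | tob (Tr (x * alpha i))]|.

Definition sgn (b : bool) : algC := (-1) ^+ b.

Definition bent (g : F -> bool) : Prop :=
  forall mu : F,
    `| \sum_(x : F) sgn (g x (+) tob (Tr (mu * x))) | = 2 ^+ (n./2).

Definition negabent (alpha : 'I_n -> F) (g : F -> bool) : Prop :=
  forall mu : F,
    `| \sum_(x : F) sgn (g x (+) tob (Tr (mu * x))) * 'i ^+ (wt alpha x) |
      = 2 ^+ (n./2).

End Defs.

From mathcomp Require Import all_boot all_order all_algebra all_field.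
From mathcomp Require Import zify ring.
Set Implicit Arguments. Unset Strict Implicit. Unset Printing Implicit Defensive.
Import Order.TTheory GRing.Theory Num.Theory.
Local Open Scope ring_scope.

(* In self-dual coordinates Q is, up to a linear term, the quadratic form
   x |-> C(wt x, 2) mod 2: its polar form Tr(x)Tr(y) + Tr(xy) takes the value
   1 on any two distinct basis vectors, so Q(x) = C(wt x, 2) + Tr(lambda x)
   for some lambda.  Since (-1)^C(w,2) i^w = ((1 + i) + (1 - i)(-1)^w) / 2 and
   (-1)^(wt x) = (-1)^Tr(x), the nega-Hadamard transform of f + Q at mu is
   ((1 + i) W_f(mu + lambda) + (1 - i) W_f(mu + lambda + 1)) / 2, whose squared
   modulus is (W_f(mu + lambda)^2 + W_f(mu + lambda + 1)^2) / 2.  If f is bent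
   this is 2^n.  Conversely, as Q + Q = 0, negabentness of f gives
   W^2 + W'^2 = 2^(n+1) for two integer Walsh values of f + Q, which forces
   |W| = 2^(n/2). *)

(* Mod 4, a and b must both be even when h > 0; halving them lowers h. *)
Lemma sum_sqr_eq_double_pow4 h a b :
  (a * a + b * b = 2 * 4 ^ h)%N -> a = (2 ^ h)%N.
Proof.
elim: h a b => [|h IH] a b.
  by case: a => [|[|a]]; case: b => [|[|b]] //; nia.
rewrite -(odd_double_half a) -(odd_double_half b) expnS expnS.
case: (odd a) (odd b) => [] [] /= E; try lia.
by rewrite (IH a./2 b./2) ?add0n //; lia.
Qed.

Lemma sgn_addb a b : sgn (a (+) b) = sgn a * sgn b.
Proof. exact: signr_addb. Qed.

Lemma sgn_int b : sgn b \is a Num.int.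
Proof. by rewrite /sgn rpredX // rpredN rpred1. Qed.

Lemma sgn_bin2_expCi w :
  2%:R * (sgn (odd 'C(w, 2)) * 'i ^+ w) = (1 + 'i) + (1 - 'i) * sgn (odd w).
Proof.
elim/ltn_ind: w => -[|[|w]] IH.
- by rewrite /sgn /=; ring.
- by rewrite /sgn /=; ring.
have -> : 'C(w.+2, 2) = ('C(w, 2) + (w + w.+1))%N by rewrite !binS !bin1 bin0; lia.
have -> : 'i ^+ w.+2 = - 'i ^+ w :> algC by rewrite !exprS mulrA -expr2 sqrCi mulN1r.
rewrite oddD (_ : odd (w + w.+1) = true); last by rewrite oddD /= addbN addbb.
by rewrite addbT /sgn signrN mulrNN -/(sgn _) IH //= negbK.
Qed.

Lemma normCK_1i_comb (N A B : algC) : A \is Num.real -> B \is Num.real ->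
  2%:R * N = (1 + 'i) * A + (1 - 'i) * B -> 2%:R * `|N| ^+ 2 = A ^+ 2 + B ^+ 2.
Proof.
move=> rA rB defN; apply: (@mulfI _ 2%:R); first by rewrite pnatr_eq0.
have -> : 2%:R * (2%:R * `|N| ^+ 2) = `|2%:R * N| ^+ 2 :> algC.
  by rewrite normrM normr_nat; ring.
rewrite defN normCK rmorphD !rmorphM /= rmorphD rmorphB /= rmorph1 conjCi.
rewrite !conj_Creal //.
transitivity ((1 - 'i ^+ 2) * (A ^+ 2 + B ^+ 2) + (2%:R + 2%:R * 'i ^+ 2) * A * B).
  by ring.
by rewrite sqrCi; ring.
Qed.

Lemma idemr_eq01 (R : idomainType) (a : R) : a ^+ 2 = a -> a = 0 \/ a = 1.
Proof.
move=> aa; have /eqP : a * (a - 1) = 0 by rewrite mulrBr mulr1 -expr2 aa subrr.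
by rewrite mulf_eq0 subr_eq0 => /orP[] /eqP ->; [left|right].
Qed.

Section FrobeniusTrace.
Variable F : finFieldType.

Lemma Tr_addn m k (w : F) : Tr (m + k) w = Tr m w + Tr k (w ^+ (2 ^ m)).
Proof.
rewrite /Tr big_split_ord /=; congr (_ + _).
by apply: eq_bigr => i _; rewrite -exprM -expnD.
Qed.

Lemma Tr_sqr m (z : F) : z ^+ (2 ^ m) = z -> Tr m (z ^+ 2) = Tr m z.
Proof.
move=> zm; apply: (@addrI _ z); rewrite [RHS]addrC.
transitivity (Tr m.+1 z).
  rewrite /Tr big_ord_recl expn0 expr1; congr (_ + _).
  by apply: eq_bigr => i _; rewrite -exprM -expnS.
by rewrite -addn1 Tr_addn /Tr big_ord1 expn0 expr1 zm.
Qed.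

Hypothesis F_char2 : 2%N \in [pchar F].

Lemma frobD k (x y : F) : (x + y) ^+ (2 ^ k) = x ^+ (2 ^ k) + y ^+ (2 ^ k).
Proof. by apply: exprDn_pchar; rewrite pnatX pnatE // F_char2. Qed.

Lemma frob_sum k I (r : seq I) (P : pred I) (G : I -> F) :
  (\sum_(i <- r | P i) G i) ^+ (2 ^ k) = \sum_(i <- r | P i) G i ^+ (2 ^ k).
Proof.
apply: (big_morph (fun x => x ^+ (2 ^ k))); first exact: frobD.
by rewrite expr0n expn_eq0.
Qed.

Lemma TrD m (x y : F) : Tr m (x + y) = Tr m x + Tr m y.
Proof. by rewrite /Tr -big_split; apply: eq_bigr => i _; apply: frobD. Qed.

Lemma Tr0 m : Tr m (0 : F) = 0.
Proof. by rewrite /Tr big1 // => i _; rewrite expr0n expn_eq0. Qed.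

Lemma Tr_sum m I (r : seq I) (P : pred I) (G : I -> F) :
  Tr m (\sum_(i <- r | P i) G i) = \sum_(i <- r | P i) Tr m (G i).
Proof. by apply: big_morph; [exact: TrD | exact: Tr0]. Qed.

Lemma Tr_idem m (z : F) : z ^+ (2 ^ m) = z -> Tr m z ^+ 2 = Tr m z.
Proof.
move=> zm; rewrite -{2}(Tr_sqr zm) (frob_sum 1).
by apply: eq_bigr => i _; rewrite exprAC.
Qed.

Lemma tobD (a b : F) : a ^+ 2 = a -> b ^+ 2 = b -> tob (a + b) = tob a (+) tob b.
Proof.
move=> /idemr_eq01[] -> /idemr_eq01[] ->;
  rewrite /tob ?addr0 ?add0r ?eqxx ?oner_eq0 //.
by rewrite addrr_pchar2 ?eqxx.
Qed.

Lemma natr_odd k : k%:R = (odd k)%:R :> F.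
Proof.
rewrite -{1}(odd_double_half k) natrD -mul2n natrM.
by rewrite (pcharf0 F_char2) mul0r addr0.
Qed.

Lemma tob_natr k : tob (k%:R : F) = odd k.
Proof. by rewrite /tob natr_odd; case: (odd k); rewrite ?oner_eq0 ?eqxx. Qed.

Lemma natr_idem k : (k%:R : F) ^+ 2 = k%:R.
Proof. by rewrite natr_odd; case: (odd k); rewrite ?expr1n ?expr0n. Qed.

End FrobeniusTrace.

Lemma big_ord_fold_double (V : nmodType) (D : nat -> V) h : (1 <= h)%N ->
  \sum_(i < h + h) D i
    = D 0%N + \sum_(1 <= i < h) (D i + D (h + h - i)%N) + D h.
Proof.
move=> h_gt0; rewrite big_split /=.
have -> : \sum_(1 <= i < h) D (h + h - i)%N = \sum_(h.+1 <= i < h + h) D i.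
  rewrite big_nat_rev /= -[h.+1]/(1 + h)%N big_addn addnK.
  by apply: eq_big_nat => i /andP[i1 ih]; congr D; lia.
rewrite -(big_mkord xpredT) (@big_cat_nat _ _ _ 1 0 (h + h)) //; last by lia.
rewrite (@big_cat_nat _ _ _ h 1 (h + h)) //; last by lia.
rewrite (@big_cat_nat _ _ _ h.+1 h (h + h)) //; last by lia.
by rewrite !big_nat1 /= (addrC (D h)) !addrA.
Qed.

Section FieldOfOrderPow2.
Variables (n : nat) (F : finFieldType).
Hypothesis cardF : #|F| = (2 ^ n)%N.

Lemma pchar2F : 2%N \in [pchar F].
Proof. exact: card_finPcharP cardF _. Qed.

Lemma expf_pow2 (x : F) : x ^+ (2 ^ n) = x.
Proof. by rewrite -cardF expf_card. Qed.

Lemma Tr_frob (x : F) k : Tr n (x ^+ (2 ^ k)) = Tr n x.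
Proof.
elim: k => [|k IH]; first by rewrite expn0 expr1.
by rewrite expnS mulnC exprM Tr_sqr // expf_pow2.
Qed.

Lemma Tr_idemF (x : F) : Tr n x ^+ 2 = Tr n x.
Proof. by apply: Tr_idem; [exact: pchar2F | exact: expf_pow2]. Qed.

Lemma Tr_mul_Tr (x y : F) : Tr n (Tr n x * y) = Tr n x * Tr n y.
Proof.
have [->|->] := idemr_eq01 (Tr_idemF x); first by rewrite !mul0r Tr0.
by rewrite !mul1r.
Qed.

Lemma Tr_mul_frob i (x y : F) : (i <= n)%N ->
  Tr n (y ^+ (2 ^ i) * x) = Tr n (x ^+ (2 ^ (n - i)) * y).
Proof.
move=> le_in; rewrite -(Tr_frob _ (n - i)) exprMn -exprM -expnD subnKC //.
by rewrite expf_pow2 mulrC.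
Qed.

Lemma tob_Tr_mulDl (a b x : F) :
  tob (Tr n (a * x)) (+) tob (Tr n (b * x)) = tob (Tr n ((a + b) * x)).
Proof. by rewrite mulrDl TrD ?tobD ?Tr_idemF //; apply: pchar2F. Qed.

End FieldOfOrderPow2.

Section SelfDualBasis.
Variables (n : nat) (F : finFieldType) (alpha : 'I_n -> F).
Hypotheses (cardF : #|F| = (2 ^ n)%N) (alpha_sd : self_dual alpha).

Let F_char2 := pchar2F cardF.

Definition basis_sum (S : {set 'I_n}) : F := \sum_(i in S) alpha i.

Lemma Tr_basis_sum_mul S j : Tr n (basis_sum S * alpha j) = (j \in S)%:R.
Proof.
rewrite /basis_sum mulr_suml Tr_sum //; under eq_bigr => i _ do rewrite alpha_sd.
have [jS|/negPf jNS] := boolP (j \in S).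
  by rewrite (bigD1 j) //= eqxx big1 ?addr0 // => i /andP[_ /negPf ->].
by rewrite big1 // => i iS; case: eqP iS => // ->; rewrite jNS.
Qed.

Lemma basis_sum_inj : injective basis_sum.
Proof.
move=> S T eqST; apply/setP => j.
have := Tr_basis_sum_mul S j; rewrite eqST Tr_basis_sum_mul.
by case: (j \in S); case: (j \in T) => // /eqP; rewrite ?oner_eq0 // eq_sym oner_eq0.
Qed.

Lemma basis_sum_onto x : exists S, x = basis_sum S.
Proof.
have /codomP[S ->] : x \in codom basis_sum.
  apply: inj_card_onto; first exact: basis_sum_inj.
  by rewrite cardF -cardsT -powersetT card_powerset cardsT card_ord.
by exists S.
Qed.

Lemma wt_basis_sum S : wt alpha (basis_sum S) = #|S|.
Proof.
rewrite /wt; congr #|pred_of_set _|; apply/setP => j.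
by rewrite inE Tr_basis_sum_mul tob_natr; case: (j \in S).
Qed.

Lemma Tr_alpha j : Tr n (alpha j) = 1.
Proof. by rewrite -Tr_sqr ?expf_pow2 // expr2 alpha_sd eqxx. Qed.

Lemma Tr_basis_sum S : Tr n (basis_sum S) = #|S|%:R.
Proof.
rewrite /basis_sum Tr_sum //.
by under eq_bigr => i _ do rewrite Tr_alpha; rewrite sumr_const.
Qed.

Lemma odd_wt x : odd (wt alpha x) = tob (Tr n x).
Proof.
by have [S ->] := basis_sum_onto x; rewrite wt_basis_sum Tr_basis_sum tob_natr.
Qed.

End SelfDualBasis.

Definition walsh (n : nat) (F : finFieldType) (h : F -> bool) (nu : F) : algC :=
  \sum_(x : F) sgn (h x (+) tob (Tr n (nu * x))).

Definition nega_walsh (n : nat) (F : finFieldType) (alpha : 'I_n -> F)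
    (h : F -> bool) (nu : F) : algC :=
  \sum_(x : F) sgn (h x (+) tob (Tr n (nu * x))) * 'i ^+ (wt alpha x).

Lemma walsh_int n (F : finFieldType) (h : F -> bool) nu : walsh n h nu \is a Num.int.
Proof. by apply: rpred_sum => x _; apply: sgn_int. Qed.

Section QuadraticForm.
Variables (n : nat) (F : finFieldType).
Hypotheses (cardF : #|F| = (2 ^ n)%N) (n_even : (n./2 + n./2)%N = n).
Hypothesis half_gt0 : (1 <= n./2)%N.

Let F_char2 := pchar2F cardF.

(* [Tr_half n] is [Tr n./2] by definition, so [Q n x] is [tob (QF x)]. *)
Definition QF (x : F) : F :=
  \sum_(1 <= i < n./2) Tr n (x ^+ (2 ^ i + 1)) + Tr n./2 (x ^+ (2 ^ n./2 + 1)).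

Lemma Tr_halves (w : F) : Tr n w = Tr n./2 w + Tr n./2 (w ^+ (2 ^ n./2)).
Proof. by rewrite -[in LHS]n_even Tr_addn. Qed.

Lemma expD_pow2S i (x y : F) : (x + y) ^+ (2 ^ i + 1) =
  x ^+ (2 ^ i + 1) + y ^+ (2 ^ i + 1) + (x ^+ (2 ^ i) * y + y ^+ (2 ^ i) * x).
Proof. by rewrite !exprD !expr1 frobD //; ring. Qed.

(* The polar form of Q is Tr(x) Tr(y) + Tr(x y): the cross terms of QF run
   over Tr(x^(2^i) y) for every 0 < i < n exactly once. *)
Lemma QF_add (x y : F) : QF (x + y) = QF x + QF y + Tr n x * Tr n y + Tr n (x * y).
Proof.
pose D i := Tr n (x ^+ (2 ^ i) * y).
have cross_low : \sum_(1 <= i < n./2) Tr n ((x + y) ^+ (2 ^ i + 1)) =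
    \sum_(1 <= i < n./2) Tr n (x ^+ (2 ^ i + 1))
  + \sum_(1 <= i < n./2) Tr n (y ^+ (2 ^ i + 1))
  + \sum_(1 <= i < n./2) (D i + D (n./2 + n./2 - i)%N).
  rewrite -!big_split /=; apply: eq_big_nat => i /andP[_ lt_ih].
  rewrite expD_pow2S !TrD // n_even /D [Tr n (y ^+ _ * x)]Tr_mul_frob //; lia.
have cross_mid : Tr n./2 ((x + y) ^+ (2 ^ n./2 + 1)) =
    Tr n./2 (x ^+ (2 ^ n./2 + 1)) + Tr n./2 (y ^+ (2 ^ n./2 + 1)) + D n./2.
  rewrite expD_pow2S !TrD // /D Tr_halves; congr (_ + (_ + _)).
  by rewrite exprMn -exprM -expnD n_even (expf_pow2 cardF) mulrC.
have cross_all : \sum_(i < n./2 + n./2) D i = Tr n x * Tr n y.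
  by rewrite n_even /D -Tr_sum // -mulr_suml Tr_mul_Tr.
rewrite /QF cross_low cross_mid -cross_all big_ord_fold_double // /D expn0 expr1.
by rewrite -[LHS]addr0 -(addrr_pchar2 F_char2 (Tr n (x * y))); ring.
Qed.

Lemma QF_idem (x : F) : QF x ^+ 2 = QF x.
Proof.
have xh : x ^+ (2 ^ n./2 + 1) ^+ (2 ^ n./2) = x ^+ (2 ^ n./2 + 1).
  by rewrite -exprM mulnDl mul1n -expnD n_even exprD (expf_pow2 cardF) exprD mulrC.
rewrite /QF (frobD F_char2 1) (frob_sum F_char2 1) (Tr_idem F_char2 xh).
congr (_ + _); apply: eq_bigr => i _; exact: Tr_idemF.
Qed.

Lemma QF0 : QF 0 = 0.
Proof.
have Tr0X m k : Tr m ((0 : F) ^+ k.+1) = 0 by rewrite exprS mul0r Tr0.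
by rewrite /QF big1 => [|i _]; rewrite addn1 Tr0X ?add0r.
Qed.

Variable alpha : 'I_n -> F.
Hypothesis alpha_sd : self_dual alpha.

Lemma QF_basis_sum S :
  QF (basis_sum alpha S) = 'C(#|S|, 2)%:R + \sum_(i in S) QF (alpha i).
Proof.
move cardS : #|S| => k; elim: k S cardS => [|k IH] S cardS.
  move/eqP: cardS; rewrite cards_eq0 => /eqP ->.
  by rewrite /basis_sum !big_set0 QF0 add0r.
have [j jS] : exists j, j \in S by apply/card_gt0P; rewrite cardS.
have cardSj : #|S :\ j| = k by move: cardS; rewrite (cardsD1 j) jS add1n => -[].
rewrite [basis_sum _ _](big_setD1 j) //= QF_add IH // [in RHS](big_setD1 j) //=.
rewrite Tr_alpha // Tr_basis_sum // mul1r mulrC Tr_basis_sum_mul // setD11.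
by rewrite cardSj binS bin1 natrD mulr0n addr0; ring.
Qed.

Lemma Q_QF x : Q n x = tob (QF x).
Proof. by []. Qed.

Definition lambdaQ : F := basis_sum alpha [set i | tob (QF (alpha i))].

Lemma Q_wt x : Q n x = odd 'C(wt alpha x, 2) (+) tob (Tr n (lambdaQ * x)).
Proof.
have [S ->] := basis_sum_onto cardF alpha_sd x.
have lin : \sum_(i in S) QF (alpha i) = Tr n (lambdaQ * basis_sum alpha S).
  rewrite [basis_sum alpha S]/basis_sum mulr_sumr Tr_sum //.
  apply: eq_bigr => i _; rewrite Tr_basis_sum_mul // inE.
  by have [->|->] := idemr_eq01 (QF_idem (alpha i)); rewrite /tob ?eqxx ?oner_eq0.
rewrite Q_QF QF_basis_sum lin tobD ?natr_idem ?Tr_idemF // tob_natr //.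
by rewrite wt_basis_sum.
Qed.

Lemma nega_walsh_addQ h mu :
  2%:R * nega_walsh alpha (fun x => h x (+) Q n x) mu
    = (1 + 'i) * walsh n h (mu + lambdaQ) + (1 - 'i) * walsh n h (mu + lambdaQ + 1).
Proof.
rewrite /nega_walsh /walsh !mulr_sumr -big_split /=; apply: eq_bigr => x _.
have -> : h x (+) Q n x (+) tob (Tr n (mu * x))
    = h x (+) tob (Tr n ((mu + lambdaQ) * x)) (+) odd 'C(wt alpha x, 2).
  rewrite Q_wt -tob_Tr_mulDl //.
  by case: (h x); case: (odd _); case: (tob _); case: (tob _).
rewrite sgn_addb -mulrA mulrCA sgn_bin2_expCi odd_wt //.
by rewrite -(tob_Tr_mulDl cardF (mu + lambdaQ) 1) mul1r !sgn_addb; ring.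
Qed.

Lemma normCK_nega_walsh_addQ h mu :
  2%:R * `|nega_walsh alpha (fun x => h x (+) Q n x) mu| ^+ 2
    = walsh n h (mu + lambdaQ) ^+ 2 + walsh n h (mu + lambdaQ + 1) ^+ 2.
Proof.
by apply: normCK_1i_comb (nega_walsh_addQ h mu); apply/Rreal_int/walsh_int.
Qed.

Lemma nega_walsh_addQQ h mu :
  nega_walsh alpha (fun x => h x (+) Q n x (+) Q n x) mu = nega_walsh alpha h mu.
Proof.
by apply: eq_bigr => x _; rewrite -[h x (+) _ (+) Q n x]addbA addbb addbF.
Qed.

End QuadraticForm.

Lemma normC_int_sqr_add (A B : algC) h : A \is a Num.int -> B \is a Num.int ->
  A ^+ 2 + B ^+ 2 = 2%:R * (2 ^+ h) ^+ 2 -> `|A| = 2 ^+ h.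
Proof.
move=> Aint Bint; rewrite -(intr_normK Aint) -(intr_normK Bint).
have /natr_norm_int/natrP[p ->] := Aint; have /natr_norm_int/natrP[q ->] := Bint.
rewrite -!natrX -natrD -natrM => /eqP; rewrite eqr_nat => /eqP pq_sum.
rewrite (@sum_sqr_eq_double_pow4 h p q) ?natrX //.
by rewrite !mulnn pq_sum -expnM [(h * 2)%N]mulnC expnM.
Qed.

Theorem theorem7 (n : nat) (F : finFieldType) (alpha : 'I_n -> F) :
  (2 <= n)%N -> ~~ odd n -> #|F| = (2 ^ n)%N -> self_dual alpha ->
  forall f : F -> bool,
    (bent n f -> negabent alpha (fun x => f x (+) Q n x)) /\
    (negabent alpha f -> bent n (fun x => f x (+) Q n x)).
Proof.
move=> n_ge2 n_evenb cardF alpha_sd f.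
have n_even : (n./2 + n./2)%N = n.
  by rewrite -{3}(odd_double_half n) (negPf n_evenb) addnn.
have half_gt0 : (1 <= n./2)%N by lia.
have key := normCK_nega_walsh_addQ cardF n_even half_gt0 alpha_sd.
have walsh_normK h nu : `|walsh n h nu| ^+ 2 = walsh n h nu ^+ 2.
  exact/real_normK/Rreal_int/walsh_int.
split=> [f_bent | f_negabent] mu.
- apply/eqP; rewrite -(eqrXn2 (_ : 0 < 2)%N) ?exprn_ge0 //; apply/eqP.
  apply: (@mulfI _ 2%:R); first by rewrite pnatr_eq0.
  by rewrite [LHS]key -!walsh_normK !f_bent; ring.
- have := key (fun x => f x (+) Q n x) (mu + lambdaQ alpha).
  rewrite nega_walsh_addQQ f_negabent addrK_pchar2 ?(pchar2F cardF) // => /esym.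
  exact: normC_int_sqr_add (walsh_int _ _ _) (walsh_int _ _ _).
Qed.
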